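(* Let $X$ be a simple complex abelian surface with principal polarization $L_0$ and indefinite quaternion multiplication, with $\mathrm{End}(X)=\mathbb Z\oplus\mathbb Za\oplus\mathbb Zb\oplus\mathbb Zab$ for primitive elements $a,b$ invariant under the Rosati involution of $L_0$. Then $\mathrm{NS}(X)$ has lattice basis $L_0,L_a,L_b$ (where $\phi_{L_0}^{-1}\phi_{L_a}=a$, $\phi_{L_0}^{-1}\phi_{L_b}=b$) with intersection matrix $$\begin{pmatrix}2&t(a)&t(b)\\ t(a)&2n(a)&n(a,b)\\ t(b)&n(a,b)&2n(b)\end{pmatrix},$$ and the discriminant of $\mathrm{NS}(X)$ equals $\tfrac12\det S_\delta(a,b)$.
   Context: $t(x)$, $n(x)$ are the reduced trace and reduced norm in the quaternion algebra $\mathrm{End}_{\mathbb Q}(X)$; $n(x,y)=n(x+y)-n(x)-n(y)$; $\delta(x,y)=t(x)t(y)-2n(x,y)$, $\delta(x)=\delta(x,x)$; $S_\delta(a,b)=\begin{pmatrix}\delta(a)&\delta(a,b)\\ \delta(a,b)&\delta(b)\end{pmatrix}$. $\phi_L:X\to\hat X$ is the homomorphism associated to $L$, and $L\mapsto\phi_{L_0}^{-1}\phi_L$ identifies $\mathrm{NS}(X)$ with the Rosati-symmetric endomorphisms. The discriminant is the determinant of the Gram matrix of the intersection form in a lattice basis. *)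

(* A complex abelian surface X = V/Lambda is modelled by its
   real coordinates: Lambda = Z^4 (standard lattice in R^4 = V) and a complex
   structure J on R^4 (J^2 = -1, multiplication by i). *)
From HB Require Import structures.
From mathcomp Require Import all_boot all_order all_algebra.
From mathcomp Require Import boolp reals.
Set Implicit Arguments. Unset Strict Implicit. Unset Printing Implicit Defensive.
Import Order.TTheory GRing.Theory Num.Theory.
Local Open Scope ring_scope.

Definition intmx (R : realType) (m n : nat) (M : 'M[int]_(m, n)) : 'M[R]_(m, n) :=
  map_mx (fun z : int => z%:~R) M.

Definition complex_structure (R : realType) (J : 'M[R]_4) : Prop :=
  J *m J = - 1%:M.

(* End(X): lattice-preserving (integral) maps that are C-linear *)
Definition is_end (R : realType) (J : 'M[R]_4) (M : 'M[int]_4) : Prop :=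
  intmx R M *m J = J *m intmx R M.

(* NS(X) (Appell-Humbert): integral alternating forms E(u,v) = u^T E v on the
   lattice with E(Ju,Jv) = E(u,v); E is the first Chern class of L. *)
Definition in_NS (R : realType) (J : 'M[R]_4) (E : 'M[int]_4) : Prop :=
  E^T = - E /\ J^T *m intmx R E *m J = intmx R E.

(* positivity of the hermitian form H(v,v) = E(iv,v) *)
Definition positive_form (R : realType) (J : 'M[R]_4) (E : 'M[int]_4) : Prop :=
  forall v : 'cV[R]_4, v != 0 -> 0 < ((J *m v)^T *m intmx R E *m v) ord0 ord0.

(* principal polarization: ample class with deg phi_L = det E = 1 *)
Definition principal_polarization (R : realType) (J : 'M[R]_4) (E0 : 'M[int]_4)
  : Prop := [/\ in_NS J E0, positive_form J E0 & \det E0 = 1].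

(* X simple: no 1-dimensional complex subtorus, i.e. no real 2-plane spanned by
   lattice vectors that is J-stable *)
Definition simple_torus (R : realType) (J : 'M[R]_4) : Prop :=
  ~ exists U : 'M[int]_(4, 2),
      \rank (intmx R U) = 2%N /\ exists C : 'M[R]_2, J *m intmx R U = intmx R U *m C.

(* complex orientation of R^4: sign of det (u, Ju, w, Jw) for a C-basis u, w *)
Definition cbasis_mx (R : realType) (J : 'M[R]_4) (u w : 'cV[R]_4) : 'M[R]_4 :=
  \matrix_(i < 4, j < 4)
    match nat_of_ord j with
    | 0 => u i ord0 | 1 => (J *m u) i ord0 | 2 => w i ord0 | _ => (J *m w) i ord0
    end.

Definition complex_orientation (R : realType) (J : 'M[R]_4) : int :=
  if `[< exists u w : 'cV[R]_4, 0 < \det (cbasis_mx J u w) >] then 1 else -1.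

(* coefficient of dx0^dx1^dx2^dx3 in E ^ F, E,F viewed as constant 2-forms
   sum_{i<j} E_ij dx_i ^ dx_j *)
Definition wedge (E F : 'M[int]_4) : int :=
  let e i j := E (@inord 3 i) (@inord 3 j) in
  let f i j := F (@inord 3 i) (@inord 3 j) in
  e 0 1 * f 2 3 - e 0 2 * f 1 3 + e 0 3 * f 1 2
  + e 1 2 * f 0 3 - e 1 3 * f 0 2 + e 2 3 * f 0 1.

(* intersection number (L.M) = integral over X of c1(L) ^ c1(M), X oriented
   by its complex structure (the lattice Z^4 has covolume 1) *)
Definition inter (R : realType) (J : 'M[R]_4) (E F : 'M[int]_4) : int :=
  complex_orientation J * wedge E F.

Definition rosati_invariant (R : realType) (E0 f : 'M[int]_4) : Prop :=
  invmx (intmx R E0) *m (intmx R f)^T *m intmx R E0 = intmx R f.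

Definition end_ring_basis (R : realType) (J : 'M[R]_4) (a b : 'M[int]_4) : Prop :=
  [/\ is_end J a, is_end J b,
      (forall M : 'M[int]_4, is_end J M <->
         exists k0 k1 k2 k3 : int, M = k0%:M + k1 *: a + k2 *: b + k3 *: (a *m b))
    & (forall k0 k1 k2 k3 : int, k0%:M + k1 *: a + k2 *: b + k3 *: (a *m b) = 0 ->
         [/\ k0 = 0, k1 = 0, k2 = 0 & k3 = 0])].

Definition primitive_end (R : realType) (J : 'M[R]_4) (a : 'M[int]_4) : Prop :=
  forall (m : int) (M : 'M[int]_4), is_end J M -> a = m *: M -> m = 1 \/ m = -1.

(* End_Q(X) (x) R, realised as the R-span of 1, a, b, ab in M_4(R) *)
Definition in_Rspan (R : realType) (a b : 'M[int]_4) (x : 'M[R]_4) : Prop :=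
  exists r0 r1 r2 r3 : R,
    x = r0%:M + r1 *: intmx R a + r2 *: intmx R b + r3 *: intmx R (a *m b).

(* psi : M_2(R) ~= End_Q(X) (x) R, an isomorphism of R-algebras
   (existence of psi = the quaternion algebra End_Q(X) is indefinite) *)
Definition real_splitting (R : realType) (a b : 'M[int]_4)
  (psi : 'M[R]_2 -> 'M[R]_4) : Prop :=
  [/\ forall (r : R) (x y : 'M[R]_2), psi (r *: x + y) = r *: psi x + psi y,
      forall x y : 'M[R]_2, psi (x *m y) = psi x *m psi y,
      psi 1%:M = 1%:M
    & injective psi] /\
  ((forall x, in_Rspan a b (psi x)) /\
   (forall z, in_Rspan a b z -> exists x, psi x = z)).

(* reduced trace / norm computed in the splitting M_2(R):
   t(x) = tr(psi^-1 x), n(x) = det(psi^-1 x) *)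
Definition rtr (R : realType) (y : 'M[R]_2) : R := \tr y.
Definition rnorm (R : realType) (y : 'M[R]_2) : R := \det y.
Definition rnorm2 (R : realType) (y z : 'M[R]_2) : R :=
  rnorm (y + z) - rnorm y - rnorm z.
Definition rdelta (R : realType) (y z : 'M[R]_2) : R :=
  rtr y * rtr z - 2 * rnorm2 y z.
Definition Sdelta (R : realType) (y z : 'M[R]_2) : 'M[R]_2 :=
  \matrix_(i < 2, j < 2)
    match nat_of_ord i, nat_of_ord j with
    | 0, 0 => rdelta y y | 1, 1 => rdelta z z | _, _ => rdelta y z end.

Definition three (T : Type) (x y z : T) (i : 'I_3) : T :=
  match nat_of_ord i with 0 => x | 1 => y | _ => z end.

Definition NS_lattice_basis (R : realType) (J : 'M[R]_4) (L : 'I_3 -> 'M[int]_4)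
  : Prop :=
  [/\ forall i, in_NS J (L i),
      forall E, in_NS J E -> exists k : 'I_3 -> int, E = \sum_i k i *: L i
    & forall k : 'I_3 -> int, \sum_i k i *: L i = 0 -> forall i, k i = 0].

Definition NS_gram (R : realType) (J : 'M[R]_4) (L : 'I_3 -> 'M[int]_4) : 'M[int]_3 :=
  \matrix_(i < 3, j < 3) inter J (L i) (L j).

(* The classes of NS(X) are the integral alternating forms [E0 f] with [f] in End(X)
   Rosati-symmetric.  The Rosati involution fixes [1], [a], [b] and sends [ab] to
   [ba], which differs from [ab] because End_Q(X) (x) R = M_2(R) is not commutative;
   so NS(X) is the Z-span of [E0], [E0 a], [E0 b].
   Intersection numbers are polarized Pfaffians of the alternating forms, the sign
   being fixed by the positivity of the hermitian form of [E0].  For [psi y]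
   Rosati-symmetric, [Pf (E0 psi y) = Pf E0 * det y]: as polynomials in [t],
   [Pf (E0 (1 + t psi y))^2 = det (psi (1 + t y)) = det (1 + t y)^2], where
   [det (psi z) = det z ^ 2] follows from [tr (psi z) = 2 tr z] and Newton's
   identities.  Hence [(L_x . L_z) = n(x, z)], and the discriminant is a 3x3
   determinant identity. *)

From HB Require Import structures.
From mathcomp Require Import all_boot all_order all_algebra.
From mathcomp Require Import boolp reals.
From mathcomp Require Import ring lra.
Set Implicit Arguments. Unset Strict Implicit. Unset Printing Implicit Defensive.
Import Order.TTheory GRing.Theory Num.Theory.
Local Open Scope ring_scope.

Section SmallDeterminants.
Variable R : comNzRingType.
Implicit Type f : nat -> nat -> R.

Definition minor_fun f (j : nat) (i k : nat) : R := f i.+1 (bump j k).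

Lemma det_mx_fun_expand n f :
  \det (\matrix_(i < n.+1, j < n.+1) f i j) =
  \sum_(j < n.+1) (-1) ^+ j * f 0%N j * \det (\matrix_(i < n, k < n) minor_fun f j i k).
Proof.
rewrite (expand_det_row _ ord0); apply: eq_bigr => j _.
rewrite mxE /cofactor add0n mulrA [_ * f _ _]mulrC; congr (_ * _ * \det _).
by apply/matrixP => i k; rewrite !mxE /= /bump leq0n add1n.
Qed.

Lemma det_mx2_fun f :
  \det (\matrix_(i < 2, j < 2) f i j) = f 0%N 0%N * f 1%N 1%N - f 0%N 1%N * f 1%N 0%N.
Proof.
rewrite det_mx_fun_expand !big_ord_recl big_ord0 /= !det_mx11 !mxE /minor_fun /bump /=.
ring.
Qed.

Definition det3_fun f : R :=
  f 0%N 0%N * (f 1%N 1%N * f 2%N 2%N - f 1%N 2%N * f 2%N 1%N)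
  - f 0%N 1%N * (f 1%N 0%N * f 2%N 2%N - f 1%N 2%N * f 2%N 0%N)
  + f 0%N 2%N * (f 1%N 0%N * f 2%N 1%N - f 1%N 1%N * f 2%N 0%N).

Lemma det_mx3_fun f : \det (\matrix_(i < 3, j < 3) f i j) = det3_fun f.
Proof.
rewrite det_mx_fun_expand !big_ord_recl big_ord0 /= !det_mx2_fun /minor_fun /bump /det3_fun /=.
ring.
Qed.

Lemma det_mx4_fun f :
  \det (\matrix_(i < 4, j < 4) f i j) =
  f 0%N 0%N * det3_fun (minor_fun f 0) - f 0%N 1%N * det3_fun (minor_fun f 1)
  + f 0%N 2%N * det3_fun (minor_fun f 2) - f 0%N 3%N * det3_fun (minor_fun f 3).
Proof. rewrite det_mx_fun_expand !big_ord_recl big_ord0 /= !det_mx3_fun; ring. Qed.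

End SmallDeterminants.

Section Entries.
Variable R : comNzRingType.

(* Entries indexed by [nat], so that [ring] sees matrix identities as polynomial ones. *)
Definition ent n (M : 'M[R]_n.+1) (i j : nat) : R := M (inord i) (inord j).

Lemma mx_ent n (M : 'M[R]_n.+1) : M = \matrix_(i < n.+1, j < n.+1) ent M i j.
Proof. by apply/matrixP => i j; rewrite mxE /ent !inord_val. Qed.

Lemma ent_tr n (M : 'M[R]_n.+1) i j : ent M^T i j = ent M j i.
Proof. by rewrite /ent mxE. Qed.

Lemma ent_add n (M N : 'M[R]_n.+1) i j : ent (M + N) i j = ent M i j + ent N i j.
Proof. by rewrite /ent mxE. Qed.

Lemma ent_opp n (M : 'M[R]_n.+1) i j : ent (- M) i j = - ent M i j.
Proof. by rewrite /ent mxE. Qed.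

Lemma ent_scale n (r : R) (M : 'M[R]_n.+1) i j : ent (r *: M) i j = r * ent M i j.
Proof. by rewrite /ent mxE. Qed.

Lemma ent_scalar n (r : R) i j : (i <= n)%N -> (j <= n)%N ->
  ent (r%:M : 'M[R]_n.+1) i j = r *+ (i == j).
Proof. by move=> hi hj; rewrite /ent mxE -val_eqE /= !inordK. Qed.

Lemma sum_ord2 (V : nmodType) (F : 'I_2 -> V) :
  \sum_(k < 2) F k = F (inord 0) + F (inord 1).
Proof.
rewrite (eq_bigr (fun k : 'I_2 => F (inord k))) => [|k _]; last by rewrite inord_val.
by rewrite !big_ord_recl big_ord0 /= addr0.
Qed.

Lemma sum_ord4 (V : nmodType) (F : 'I_4 -> V) :
  \sum_(k < 4) F k = F (inord 0) + F (inord 1) + F (inord 2) + F (inord 3).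
Proof.
rewrite (eq_bigr (fun k : 'I_4 => F (inord k))) => [|k _]; last by rewrite inord_val.
by rewrite !big_ord_recl big_ord0 /= addr0 !addrA.
Qed.

Lemma ent_mul2 (M N : 'M[R]_2) i j :
  ent (M *m N) i j = ent M i 0 * ent N 0 j + ent M i 1 * ent N 1 j.
Proof. by rewrite /ent mxE sum_ord2. Qed.

Lemma ent_mul4 (M N : 'M[R]_4) i j :
  ent (M *m N) i j = ent M i 0 * ent N 0 j + ent M i 1 * ent N 1 j
                   + ent M i 2 * ent N 2 j + ent M i 3 * ent N 3 j.
Proof. by rewrite /ent mxE sum_ord4. Qed.

Lemma mxtrace2 (M : 'M[R]_2) : \tr M = ent M 0 0 + ent M 1 1.
Proof. by rewrite /mxtrace sum_ord2. Qed.

Lemma mxtrace4 (M : 'M[R]_4) : \tr M = ent M 0 0 + ent M 1 1 + ent M 2 2 + ent M 3 3.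
Proof. by rewrite /mxtrace sum_ord4. Qed.

Lemma det_mx2 (M : 'M[R]_2) : \det M = ent M 0 0 * ent M 1 1 - ent M 0 1 * ent M 1 0.
Proof. by rewrite [in LHS](mx_ent M) det_mx2_fun. Qed.

Lemma det_mx3 (M : 'M[R]_3) : \det M = det3_fun (ent M).
Proof. by rewrite [in LHS](mx_ent M) det_mx3_fun. Qed.

Lemma det_mx4_newton (M : 'M[R]_4) : let p k := \tr (M ^+ k) in
  24%:R * \det M = p 1%N ^+ 4 - 6%:R * p 1%N ^+ 2 * p 2%N + 3%:R * p 2%N ^+ 2
                   + 8%:R * p 1%N * p 3%N - 6%:R * p 4%N.
Proof.
move=> p; rewrite /p !exprS expr0 !mulr1 -!mulmxE !mxtrace4 !ent_mul4.
rewrite [in LHS](mx_ent M) det_mx4_fun /det3_fun /minor_fun /bump /=.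
ring.
Qed.

Lemma det_1_plus_scale (y : 'M[R]_2) t :
  \det (1%:M + t *: y) = 1 + t * \tr y + t ^+ 2 * \det y.
Proof. rewrite !det_mx2 mxtrace2 !ent_add !ent_scale !ent_scalar //=; ring. Qed.

End Entries.

Definition pfaff (R : comNzRingType) (M : 'M[R]_4) : R :=
  ent M 0 1 * ent M 2 3 - ent M 0 2 * ent M 1 3 + ent M 0 3 * ent M 1 2.

Lemma pfaff_lin (R : comNzRingType) (X Y : 'M[R]_4) t :
  pfaff (X + t *: Y) = pfaff X + t * (pfaff (X + Y) - pfaff X - pfaff Y) + t ^+ 2 * pfaff Y.
Proof. rewrite /pfaff !ent_add !ent_scale; ring. Qed.

Section Pfaffian.
Variable R : realDomainType.
Implicit Types M A : 'M[R]_4.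

Lemma alt_ent M : M^T = - M -> forall i j, ent M j i = - ent M i j.
Proof. by move=> hM i j; rewrite -ent_tr hM ent_opp. Qed.

Lemma alt_ent_diag M : M^T = - M -> forall i, ent M i i = 0.
Proof. by move=> hM i; have := alt_ent hM i i; lra. Qed.

Ltac alt_ent_simpl hM :=
  rewrite ?(alt_ent hM 1 0) ?(alt_ent hM 2 0) ?(alt_ent hM 3 0) ?(alt_ent hM 2 1)
    ?(alt_ent hM 3 1) ?(alt_ent hM 3 2)
    ?(alt_ent_diag hM 0) ?(alt_ent_diag hM 1) ?(alt_ent_diag hM 2) ?(alt_ent_diag hM 3).

Lemma pfaff_sqr M : M^T = - M -> pfaff M ^+ 2 = \det M.
Proof.
move=> hM; rewrite [in RHS](mx_ent M) det_mx4_fun /det3_fun /minor_fun /bump /= /pfaff.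
alt_ent_simpl hM; ring.
Qed.

Lemma pfaff_congr M A : M^T = - M -> pfaff (A^T *m M *m A) = \det A * pfaff M.
Proof.
move=> hM; rewrite [in \det A](mx_ent A) det_mx4_fun /det3_fun /minor_fun /bump /= /pfaff.
rewrite !ent_mul4 !ent_tr; alt_ent_simpl hM; ring.
Qed.

End Pfaffian.

Lemma wedge_pfaff (E F : 'M[int]_4) : wedge E F = pfaff (E + F) - pfaff E - pfaff F.
Proof. rewrite /wedge /pfaff !ent_add /ent; ring. Qed.

Section AlgebraEmbedding.
Variables (R : numFieldType) (psi : 'M[R]_2 -> 'M[R]_4).
Hypotheses (psi_linear : forall r x y, psi (r *: x + y) = r *: psi x + psi y)
  (psiM : forall x y, psi (x *m y) = psi x *m psi y) (psi1 : psi 1%:M = 1%:M).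

Lemma psi0 : psi 0 = 0.
Proof.
have := psi_linear 1 0 0; rewrite !scale1r addr0 => h.
by apply: (addrI (psi 0)); rewrite -h addr0.
Qed.

Lemma psiD x y : psi (x + y) = psi x + psi y.
Proof. by have := psi_linear 1 x y; rewrite !scale1r. Qed.

Lemma psiZ r x : psi (r *: x) = r *: psi x.
Proof. by have := psi_linear r x 0; rewrite !addr0 psi0 addr0. Qed.

Lemma psiX x k : psi (x ^+ k) = psi x ^+ k.
Proof.
elim: k => [|k IHk]; first by rewrite !expr0 psi1.
by rewrite !exprS -!mulmxE psiM IHk.
Qed.

Lemma mxtrace_psi_delta (i j : 'I_2) : \tr (psi (delta_mx i j)) = if i == j then 2 else 0.
Proof.
have trC x y : \tr (psi (x *m y)) = \tr (psi (y *m x)) by rewrite !psiM mxtrace_mulC.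
have [<-|ne] := eqVneq i j; last first.
  rewrite -[delta_mx i j](mul_delta_mx (i : 'I_2)) trC.
  by rewrite mul_delta_mx_0 ?psi0 ?mxtrace0 // eq_sym.
have tr_diag k : \tr (psi (delta_mx i i)) = \tr (psi (delta_mx k k)).
  by rewrite -(mul_delta_mx k i i) trC mul_delta_mx.
have : \tr (psi 1%:M) = \tr (psi (delta_mx i i)) *+ 2.
  by rewrite mx1_sum_delta sum_ord2 psiD mxtraceD -!tr_diag.
rewrite psi1 mxtrace1 => h4.
apply: (@mulfI _ 2); first by rewrite pnatr_eq0.
by rewrite mulr_natl -h4; ring.
Qed.

Lemma mxtrace_psi z : \tr (psi z) = 2 * \tr z.
Proof.
rewrite [in LHS](matrix_sum_delta z) !sum_ord2 !psiD !psiZ !mxtraceD !mxtraceZ.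
rewrite !mxtrace_psi_delta mxtrace2 /ent -!val_eqE /= !inordK //=.
ring.
Qed.

Lemma det_psi z : \det (psi z) = \det z ^+ 2.
Proof.
have h24 : (24%:R : R) != 0 by rewrite pnatr_eq0.
apply: (mulfI h24); rewrite det_mx4_newton -!psiX !mxtrace_psi.
rewrite !exprS expr0 !mulr1 -!mulmxE !mxtrace2 !ent_mul2 det_mx2.
ring.
Qed.

End AlgebraEmbedding.

Lemma quadratic_sqr_coef2 (R : numFieldType) (e c p s q : R) : e ^+ 2 = 1 ->
  (forall t, (e + t * c + t ^+ 2 * p) ^+ 2 = (1 + t * s + t ^+ 2 * q) ^+ 2) -> p = e * q.
Proof.
move=> e2 h; pose g t := (e + t * c + t ^+ 2 * p) ^+ 2 - (1 + t * s + t ^+ 2 * q) ^+ 2.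
have g0 t : g t = 0 by rewrite /g h subrr.
have nat_eq0 (n : nat) (x : R) : n != 0%N -> n%:R * x = 0 -> x = 0.
  by move=> n0 /eqP; rewrite mulf_eq0 pnatr_eq0 (negbTE n0) => /eqP.
(* the odd and even parts of [g] at [t = 1, 2] isolate the coefficients of [t] and [t^2] *)
have sec : e * c = s.
  apply/eqP; rewrite -subr_eq0; apply/eqP/(nat_eq0 24%N) => //.
  transitivity (8 * (g 1 - g (-1)) - (g 2 - g (-2))); first by rewrite /g; ring.
  by rewrite !g0; ring.
have quad : c ^+ 2 + 2 * e * p - s ^+ 2 - 2 * q = 0.
  apply: (nat_eq0 24%N) => //.
  transitivity (16 * (g 1 + g (-1)) - (g 2 + g (-2)) - 30 * (e ^+ 2 - 1)).
    by rewrite /g; ring.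
  by rewrite !g0 e2; ring.
apply/eqP; rewrite -subr_eq0; apply/eqP/(nat_eq0 2%N) => //.
transitivity (e * (c ^+ 2 + 2 * e * p - s ^+ 2 - 2 * q) + (e ^+ 2 - 1) * (e * c ^+ 2 - 2 * p)).
  by rewrite -sec; ring.
by rewrite quad e2; ring.
Qed.

Section PfaffianPolarized.
Variables (R : realFieldType) (psi : 'M[R]_2 -> 'M[R]_4).
Hypotheses (psi_linear : forall r x y, psi (r *: x + y) = r *: psi x + psi y)
  (psiM : forall x y, psi (x *m y) = psi x *m psi y) (psi1 : psi 1%:M = 1%:M).
Variable E : 'M[R]_4.
Hypotheses (E_alt : E^T = - E) (detE : \det E = 1).

(* Both sides of [pfaff (E + t E psi y) ^+ 2 = det (1 + t y) ^+ 2] are squares of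
   quadratics in [t]; comparing coefficients gives the claim. *)
Lemma pfaff_psi y : (E *m psi y)^T = - (E *m psi y) -> pfaff (E *m psi y) = pfaff E * \det y.
Proof.
move=> Ey_alt; have pfE2 : pfaff E ^+ 2 = 1 by rewrite pfaff_sqr.
apply: (quadratic_sqr_coef2 pfE2 (s := \tr y)
  (c := pfaff (E + E *m psi y) - pfaff E - pfaff (E *m psi y))) => t.
have Et : E *m psi (1%:M + t *: y) = E + t *: (E *m psi y).
  by rewrite (psiD psi_linear) psi1 (psiZ psi_linear) mulmxDr mulmx1 scalemxAr.
have Et_alt : (E + t *: (E *m psi y))^T = - (E + t *: (E *m psi y)).
  by rewrite linearD linearZ /= Ey_alt E_alt opprD scalerN.
rewrite -pfaff_lin pfaff_sqr // -Et det_mulmx detE mul1r.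
by rewrite (det_psi psi_linear psiM psi1) det_1_plus_scale.
Qed.

End PfaffianPolarized.

Section ComplexOrientation.
Variables (R : realType) (J E : 'M[R]_4).
Hypotheses (JJ : J *m J = - 1%:M) (E_alt : E^T = - E) (EJ : J^T *m E *m J = E)
  (E_pos : forall v : 'cV[R]_4, v != 0 -> 0 < ((J *m v)^T *m E *m v) ord0 ord0).

Definition form (x y : 'cV[R]_4) : R := (x^T *m E *m y) ord0 ord0.
Definition hform (x : 'cV[R]_4) : R := form (J *m x) x.
Definition hgram (u w : 'cV[R]_4) : R :=
  hform u * hform w - form u w ^+ 2 - form u (J *m w) ^+ 2.

Lemma formDl x y z : form (x + y) z = form x z + form y z.
Proof. by rewrite /form linearD /= !mulmxDl mxE. Qed.

Lemma formDr x y z : form x (y + z) = form x y + form x z.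
Proof. by rewrite /form !mulmxDr mxE. Qed.

Lemma formZl r x z : form (r *: x) z = r * form x z.
Proof. by rewrite /form linearZ /= -!scalemxAl mxE. Qed.

Lemma formZr r x z : form x (r *: z) = r * form x z.
Proof. by rewrite /form -!scalemxAr mxE. Qed.

Lemma formNl x z : form (- x) z = - form x z.
Proof. by rewrite -scaleN1r formZl mulN1r. Qed.

Lemma formNr x z : form x (- z) = - form x z.
Proof. by rewrite -scaleN1r formZr mulN1r. Qed.

Lemma formJJ x y : form (J *m x) (J *m y) = form x y.
Proof. by rewrite /form trmx_mul !mulmxA -(mulmxA _ J^T) -(mulmxA _ (J^T *m E)) EJ. Qed.

Lemma formC x y : form y x = - form x y.
Proof.
rewrite /form -[in LHS](trmxK (y^T *m E *m x)) mxE !trmx_mul trmxK E_alt.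
by rewrite mulNmx mulmxN mulmxA mxE.
Qed.

Lemma form_xx x : form x x = 0.
Proof. by have := formC x x; lra. Qed.

Lemma JJv (x : 'cV[R]_4) : J *m (J *m x) = - x.
Proof. by rewrite mulmxA JJ mulNmx mul1mx. Qed.

Lemma form_Jl x y : form (J *m x) y = - form x (J *m y).
Proof. by rewrite -formJJ JJv formNl. Qed.

Lemma hform_ge0 x : 0 <= hform x.
Proof.
have [->|nz] := eqVneq x 0; last exact/ltW/E_pos.
by rewrite /hform /form !mulmx0 mxE.
Qed.

(* The component of [w] orthogonal to [u] and [J u], up to the factor [hform u]. *)
Definition hproj (u w : 'cV[R]_4) : 'cV[R]_4 :=
  hform u *: w + (form u (J *m w) *: u + form u w *: (J *m u)).

Lemma hproj_orth u w :
  [/\ form u (hproj u w) = 0, form u (J *m hproj u w) = 0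
    & hform (hproj u w) = hform u * hgram u w].
Proof.
rewrite /hproj /hgram /hform !mulmxDr -!scalemxAr !JJv.
rewrite !formDl !formDr !formZl !formZr !formNl !formNr !form_Jl !JJv !formNr.
rewrite ?form_xx (formC u w) (formC (J *m u) w) form_Jl opprK.
by split; ring.
Qed.

Lemma hgram_ge0 u w : 0 <= hgram u w.
Proof.
have [->|nz] := eqVneq u 0.
  have form0l y : form 0 y = 0 by rewrite -(scale0r (0 : 'cV[R]_4)) formZl mul0r.
  by rewrite /hgram /hform mulmx0 !form0l mul0r expr2 mulr0 !subr0.
have [_ _ hx] := hproj_orth u w.
by have := hform_ge0 (hproj u w); rewrite hx pmulr_rge0 //; apply: E_pos.
Qed.

Lemma cbasis_col (u w : 'cV[R]_4) :
  [/\ col (inord 0) (cbasis_mx J u w) = u, col (inord 1) (cbasis_mx J u w) = J *m u,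
      col (inord 2) (cbasis_mx J u w) = w & col (inord 3) (cbasis_mx J u w) = J *m w].
Proof.
have o1 (l : 'I_1) : l = ord0 by apply/val_inj; case: l => [[]].
by split; apply/matrixP => k l; rewrite !mxE inordK // (o1 l).
Qed.

Lemma ent_congr_form (A : 'M[R]_4) i j :
  ent (A^T *m E *m A) i j = form (col (inord i) A) (col (inord j) A).
Proof.
rewrite /ent /form !mxE; apply: eq_bigr => l _; rewrite !mxE; congr (_ * _).
by apply: eq_bigr => k _; rewrite !mxE.
Qed.

Lemma pfaff_cbasis u w : pfaff ((cbasis_mx J u w)^T *m E *m cbasis_mx J u w) = hgram u w.
Proof.
have [c0 c1 c2 c3] := cbasis_col u w.
rewrite /pfaff !ent_congr_form c0 c1 c2 c3 formJJ /hgram /hform !form_Jl.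
ring.
Qed.

Lemma exists_hgram_gt0 : exists u w, 0 < hgram u w.
Proof.
pose e (i : nat) : 'cV[R]_4 := delta_mx (inord i) ord0.
have e0_neq0 : e 0%N != 0.
  by apply/eqP => /matrixP /(_ (inord 0) ord0); rewrite !mxE eqxx => /eqP; rewrite oner_eq0.
have hpos : 0 < hform (e 0%N) by apply: E_pos.
have hgram_proj w : hproj (e 0%N) w != 0 -> 0 < hgram (e 0%N) (hproj (e 0%N) w).
  move=> nz; rewrite /hgram; have [-> -> _] := hproj_orth (e 0%N) w.
  by rewrite expr0n /= !subr0 mulr_gt0 //; apply: E_pos.
have [nz|/negPn/eqP/matrixP x1] := boolP (hproj (e 0%N) (e 1%N) != 0).
  by exists (e 0%N), (hproj (e 0%N) (e 1%N)); apply: hgram_proj.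
have [nz|/negPn/eqP/matrixP x2] := boolP (hproj (e 0%N) (e 2%N) != 0).
  by exists (e 0%N), (hproj (e 0%N) (e 2%N)); apply: hgram_proj.
(* otherwise [e 1] and [e 2] both lie in the real span of [e 0] and [J e 0] *)
exfalso; have := x1 (inord 1) ord0; have := x1 (inord 2) ord0; have := x2 (inord 2) ord0.
rewrite /hproj !mxE -!val_eqE /= !inordK // /= ?mulr1 ?mulr0 ?add0r ?addr0.
set h := hform _; set j2 := \sum_j _; set p1 := form _ (e 1%N); set p2 := form _ (e 2%N).
move=> x22 x12 x11.
have p1_0 : p1 = 0.
  apply: (mulfI (lt0r_neq0 hpos)); rewrite -/h mulr0.
  transitivity ((h + p2 * j2) * p1 - p2 * (p1 * j2)); first by ring.
  by rewrite x22 x12; ring.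
by move: x11 hpos; rewrite p1_0 mul0r addr0 -/h => ->; rewrite ltxx.
Qed.

(* In a complex basis [(u, J u, w, J w)] the Pfaffian of [E] is the Gram determinant
   [hgram u w] of the hermitian form: nonnegative by Cauchy-Schwarz, and positive for
   some basis.  So the complex orientation is the sign of [pfaff E]. *)
Lemma complex_orientation_pfaff : pfaff E ^+ 2 = 1 -> (complex_orientation J)%:~R * pfaff E = 1.
Proof.
move/eqP; rewrite sqrf_eq1 => /orP[]/eqP pfE; rewrite /complex_orientation.
  have [u [w hgt0]] := exists_hgram_gt0.
  rewrite asboolT ?pfE ?mulr1 //; exists u, w.
  by move: hgt0; rewrite -pfaff_cbasis pfaff_congr // pfE mulr1.
rewrite asboolF ?pfE /= ?mulrNN ?mulr1 // => -[u [w]].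
by have := hgram_ge0 u w; rewrite -pfaff_cbasis pfaff_congr // pfE; lra.
Qed.

End ComplexOrientation.

Section IntegerMatrices.
Variable R : realType.

Lemma intmxM m n p (A : 'M[int]_(m, n)) (B : 'M[int]_(n, p)) :
  intmx R (A *m B) = intmx R A *m intmx R B.
Proof. exact: map_mxM. Qed.

Lemma intmxD m n (A B : 'M[int]_(m, n)) : intmx R (A + B) = intmx R A + intmx R B.
Proof. exact: map_mxD. Qed.

Lemma intmxN m n (A : 'M[int]_(m, n)) : intmx R (- A) = - intmx R A.
Proof. exact: map_mxN. Qed.

Lemma intmxZ m n (k : int) (A : 'M[int]_(m, n)) : intmx R (k *: A) = k%:~R *: intmx R A.
Proof. exact: map_mxZ. Qed.

Lemma intmxT m n (A : 'M[int]_(m, n)) : intmx R A^T = (intmx R A)^T.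
Proof. by rewrite /intmx map_trmx. Qed.

Lemma intmx_scalar n (k : int) : intmx R (k%:M : 'M[int]_n) = (k%:~R)%:M.
Proof. by rewrite /intmx map_scalar_mx. Qed.

Lemma intmx1 n : intmx R (1%:M : 'M[int]_n) = 1%:M.
Proof. by rewrite /intmx map_mx1. Qed.

Lemma intmx_inj m n : injective (@intmx R m n).
Proof. by move=> A B /matrixP AB; apply/matrixP => i j; have := AB i j; rewrite !mxE => /intr_inj. Qed.

Lemma det_intmx n (A : 'M[int]_n) : \det (intmx R A) = (\det A)%:~R.
Proof. by rewrite /intmx det_map_mx. Qed.

Lemma adj_intmx n (A : 'M[int]_n) : \adj (intmx R A) = intmx R (\adj A).
Proof. by rewrite /intmx map_mx_adj. Qed.

Lemma pfaff_intmx (M : 'M[int]_4) : pfaff (intmx R M) = (pfaff M)%:~R.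
Proof. by rewrite /pfaff /ent !mxE intrD intrB !intrM. Qed.

End IntegerMatrices.

Section ReducedNorm.
Variable R : realType.
Implicit Types y z : 'M[R]_2.

Lemma rnorm2C y z : rnorm2 y z = rnorm2 z y.
Proof. by rewrite /rnorm2 (addrC y z); ring. Qed.

Lemma rnorm2_1l y : rnorm2 1%:M y = rtr y.
Proof. by rewrite /rnorm2 /rnorm /rtr !det_mx2 mxtrace2 !ent_add !ent_scalar //=; ring. Qed.

Lemma rnorm2_1r y : rnorm2 y 1%:M = rtr y.
Proof. by rewrite rnorm2C rnorm2_1l. Qed.

Lemma rnorm2_diag y : rnorm2 y y = 2 * rnorm y.
Proof. by rewrite /rnorm2 /rnorm !det_mx2 !ent_add; ring. Qed.

Lemma rnorm2_11 : rnorm2 (1%:M : 'M[R]_2) 1%:M = 2.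
Proof. by rewrite rnorm2_1l /rtr mxtrace1. Qed.

Lemma det_NS_gram_Sdelta y z :
  \det (\matrix_(i < 3, j < 3)
          three (three 2 (rtr y) (rtr z) j)
                (three (rtr y) (2 * rnorm y) (rnorm2 y z) j)
                (three (rtr z) (rnorm2 y z) (2 * rnorm z) j) i)
  = 1 / 2 * \det (Sdelta y z).
Proof.
rewrite det_mx3 det_mx2 /det3_fun /ent !mxE /three !inordK //=.
by rewrite /rdelta !rnorm2_diag; field.
Qed.

End ReducedNorm.

Lemma comm_span2 (R : comNzRingType) n (x y : 'M[R]_n.+1) : GRing.comm x y ->
  forall r0 r1 r2 r3 s0 s1 s2 s3 : R,
  let c a0 a1 a2 a3 := a0%:M + a1 *: x + a2 *: y + a3 *: (x * y) in
  GRing.comm (c r0 r1 r2 r3) (c s0 s1 s2 s3).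
Proof.
move=> cxy r0 r1 r2 r3 s0 s1 s2 s3 c.
have comm_scalar (X : 'M[R]_n.+1) a : GRing.comm X a%:M.
  by rewrite /GRing.comm -!mulmxE scalar_mxC.
have comm_c (X : 'M[R]_n.+1) : GRing.comm X x -> GRing.comm X y ->
    forall a0 a1 a2 a3, GRing.comm X (c a0 a1 a2 a3).
  move=> cXx cXy a0 a1 a2 a3; rewrite /c -!mul_scalar_mx !mulmxE.
  by do ?[apply: commrD]; do ?[apply: commrM]; try exact: comm_scalar.
apply: (comm_c); apply/commr_sym/comm_c => //; exact: commr_sym.
Qed.

Lemma real_splitting_noncomm (R : realType) (a b : 'M[int]_4) (psi : 'M[R]_2 -> 'M[R]_4)
    (ya yb : 'M[R]_2) :
  real_splitting a b psi -> psi ya = intmx R a -> psi yb = intmx R b ->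
  intmx R a *m intmx R b != intmx R b *m intmx R a.
Proof.
move=> [[psi_lin psiM psi1 psi_inj] [psi_in _]] hya hyb; apply/eqP => ab_comm.
have yab_comm : GRing.comm ya yb by apply: psi_inj; rewrite -!mulmxE !psiM hya hyb.
have span x : exists r0 r1 r2 r3, x = r0%:M + r1 *: ya + r2 *: yb + r3 *: (ya * yb).
  have [r0 [r1 [r2 [r3 psix]]]] := psi_in x; exists r0, r1, r2, r3; apply: psi_inj.
  rewrite psix !(psiD psi_lin) !(psiZ psi_lin) -mulmxE psiM hya hyb intmxM.
  by rewrite -scalemx1 (psiZ psi_lin) psi1 scalemx1.
(* the span of [1, ya, yb, ya yb] is all of [M_2(R)], which is not commutative *)
have [r0 [r1 [r2 [r3 e01]]]] := span (delta_mx ord0 ord_max).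
have [s0 [s1 [s2 [s3 e10]]]] := span (delta_mx ord_max ord0).
have := comm_span2 yab_comm r0 r1 r2 r3 s0 s1 s2 s3.
rewrite /= -e01 -e10 /GRing.comm -!mulmxE !mul_delta_mx.
by move/matrixP/(_ ord0 ord0); rewrite !mxE /= => /eqP; rewrite oner_eq0.
Qed.

(* Rosati-symmetric combinations of [1, A, B, AB] have no [AB] component, since the
   Rosati involution maps [AB] to [BA]. *)
Lemma rosati_sym_comb_coefM (R : fieldType) n (E A B X : 'M[R]_n) (k0 k1 k2 k3 : R) :
  E \in unitmx -> A^T *m E = E *m A -> B^T *m E = E *m B -> X^T *m E = E *m X ->
  X = k0%:M + k1 *: A + k2 *: B + k3 *: (A *m B) -> A *m B != B *m A -> k3 = 0.
Proof.
move=> E_unit AE BE XE X_def ncomm; apply/eqP; apply: contraNT ncomm => k3_neq0.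
have : E *m (k0%:M + k1 *: A + k2 *: B + k3 *: (B *m A)) = E *m X.
  rewrite -XE X_def !linearD !linearZ /= tr_scalar_mx trmx_mul !mulmxDl.
  rewrite -!scalemxAl mul_scalar_mx mul_mx_scalar AE BE -mulmxA AE.
  by rewrite !mulmxA BE.
move/(can_inj (mulKmx E_unit)); rewrite X_def => /addrI /(scalerI k3_neq0) BA_AB.
by rewrite BA_AB.
Qed.

Section Polarization.
Variables (R : realType) (J : 'M[R]_4) (E0 : 'M[int]_4).
Hypotheses (JJ : J *m J = - 1%:M) (E0_alt : E0^T = - E0)
  (E0J : J^T *m intmx R E0 *m J = intmx R E0) (E0_pos : positive_form J E0)
  (detE0 : \det E0 = 1).

Let E := intmx R E0.

Lemma polar_alt : E^T = - E.
Proof. by rewrite /E -intmxT E0_alt intmxN. Qed.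

Lemma polar_det : \det E = 1.
Proof. by rewrite /E det_intmx detE0. Qed.

Lemma polar_unit : E \in unitmx.
Proof. by rewrite unitmxE polar_det unitr1. Qed.

Lemma rosati_invariant_trmx x :
  rosati_invariant R E0 x -> (intmx R x)^T *m E = E *m intmx R x.
Proof. by move=> ros_x; rewrite -[in RHS]ros_x !mulmxA mulmxV ?polar_unit // mul1mx. Qed.

Lemma rosati_invariant_alt x : rosati_invariant R E0 x -> (E0 *m x)^T = - (E0 *m x).
Proof.
move=> ros_x; apply: (@intmx_inj R).
by rewrite intmxN intmxT !intmxM trmx_mul polar_alt mulmxN rosati_invariant_trmx.
Qed.

Lemma polar_orientation : (complex_orientation J)%:~R * pfaff E = 1.
Proof.
apply: complex_orientation_pfaff => //; first exact: polar_alt.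
by rewrite pfaff_sqr ?polar_alt ?polar_det.
Qed.

Lemma in_NS_polar_end x : is_end J x -> (E0 *m x)^T = - (E0 *m x) -> in_NS J (E0 *m x).
Proof.
move=> x_end x_alt; split => //.
by rewrite intmxM !mulmxA -(mulmxA _ (intmx R x)) x_end !mulmxA E0J.
Qed.

Lemma mulmxJ_invariant (X : 'M[R]_4) : J^T *m X *m J = X -> X *m J = - (J^T *m X).
Proof. by move=> XJ; rewrite -{1}XJ -mulmxA JJ mulmxN mulmx1. Qed.

(* An element of [NS(X)] is [E0 f] for the endomorphism [f = phi_L0^-1 phi_L]. *)
Lemma NS_polar_end F : in_NS J F -> is_end J (\adj E0 *m F).
Proof.
move=> [_ FJ]; have adjE : intmx R (\adj E0) = invmx E.
  by rewrite -adj_intmx /invmx polar_unit polar_det invr1 scale1r.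
have J_invE : J *m invmx E = - (invmx E *m J^T).
  apply: (can_inj (mulKmx polar_unit)); rewrite mulmxN !mulmxA mulmxV ?polar_unit //.
  apply: (can_inj (mulmxK polar_unit)); rewrite -mulmxA mulVmx ?polar_unit //.
  by rewrite mulmx1 mul1mx mulNmx (mulmxJ_invariant E0J).
rewrite /is_end intmxM adjE -mulmxA (mulmxJ_invariant FJ) mulmxA J_invE.
by rewrite mulmxN mulNmx mulmxA.
Qed.

Lemma polar_adjK (F : 'M[int]_4) : E0 *m (\adj E0 *m F) = F.
Proof. by rewrite mulmxA mul_mx_adj detE0 mul1mx. Qed.

Lemma NS_polar_end_rosati F : in_NS J F ->
  (intmx R (\adj E0 *m F))^T *m E = E *m intmx R (\adj E0 *m F).
Proof.
move=> [F_alt _]; have EX : E *m intmx R (\adj E0 *m F) = intmx R F.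
  by rewrite -intmxM polar_adjK.
rewrite EX -[E in LHS]opprK -polar_alt mulmxN -trmx_mul EX.
by rewrite -intmxT F_alt intmxN opprK.
Qed.

Lemma three_polar (a b : 'M[int]_4) i :
  three E0 (E0 *m a) (E0 *m b) i = E0 *m three 1%:M a b i.
Proof. by case: i => [[|[|[|//]]] ?]; rewrite /= ?mulmx1. Qed.

Lemma NS_lattice_basis_polar a b :
  end_ring_basis J a b -> rosati_invariant R E0 a -> rosati_invariant R E0 b ->
  intmx R a *m intmx R b != intmx R b *m intmx R a ->
  NS_lattice_basis J (three E0 (E0 *m a) (E0 *m b)).
Proof.
move=> [a_end b_end end_span end_free] ros_a ros_b ncomm.
have ord3_cases (i : 'I_3) :
    [\/ i = ord0, i = lift ord0 ord0 | i = lift ord0 (lift ord0 ord0)].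
  by case: i => [[|[|[|//]]] ?]; [apply: Or31 | apply: Or32 | apply: Or33]; apply: val_inj.
have sum_L (k : 'I_3 -> int) : \sum_i k i *: three E0 (E0 *m a) (E0 *m b) i =
    E0 *m ((k ord0)%:M + k (lift ord0 ord0) *: a + k (lift ord0 (lift ord0 ord0)) *: b).
  by rewrite !big_ord_recl big_ord0 addr0 /= !mulmxDr -!scalemxAr mul_mx_scalar addrA.
split.
- move=> i; rewrite three_polar; apply: in_NS_polar_end.
    by case: (ord3_cases i) => ->; rewrite /is_end /= ?intmx1 ?mul1mx ?mulmx1.
  by case: (ord3_cases i) => ->; rewrite /= ?mulmx1 ?rosati_invariant_alt.
- move=> F F_NS; have [k0 [k1 [k2 [k3 f_def]]]] := (end_span _).1 (NS_polar_end F_NS).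
  have k3_0 : k3 = 0.
    apply/eqP; rewrite -(intr_eq0 R); apply/eqP.
    apply: (rosati_sym_comb_coefM polar_unit (rosati_invariant_trmx ros_a)
      (rosati_invariant_trmx ros_b) (NS_polar_end_rosati F_NS) _ ncomm).
    by rewrite f_def !intmxD !intmxZ intmx_scalar intmxM.
  exists (three k0 k1 k2); rewrite sum_L /= -(polar_adjK F) f_def k3_0 scale0r addr0.
  by [].
- move=> k; rewrite sum_L => /(congr1 (mulmx (\adj E0))).
  rewrite mulmxA mul_adj_mx detE0 mul1mx mulmx0 => comb0.
  have := end_free (k ord0) (k (lift ord0 ord0)) (k (lift ord0 (lift ord0 ord0))) 0.
  rewrite scale0r addr0 => /(_ comb0) [k0_0 k1_0 k2_0 _] i.
  by case: (ord3_cases i) => ->.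
Qed.

Section Gram.
Variable psi : 'M[R]_2 -> 'M[R]_4.
Hypotheses (psi_linear : forall r x y, psi (r *: x + y) = r *: psi x + psi y)
  (psiM : forall x y, psi (x *m y) = psi x *m psi y) (psi1 : psi 1%:M = 1%:M).

Lemma inter_polar_psi x z yx yz :
  psi yx = intmx R x -> psi yz = intmx R z ->
  (E0 *m x)^T = - (E0 *m x) -> (E0 *m z)^T = - (E0 *m z) ->
  (inter J (E0 *m x) (E0 *m z))%:~R = rnorm2 yx yz.
Proof.
move=> psi_x psi_z x_alt z_alt.
have alt_psi y w : psi y = intmx R w -> (E0 *m w)^T = - (E0 *m w) ->
    (E *m psi y)^T = - (E *m psi y).
  by move=> ->; rewrite -intmxM -intmxT => ->; rewrite intmxN.
have xz_alt : (E *m psi (yx + yz))^T = - (E *m psi (yx + yz)).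
  by rewrite (psiD psi_linear) mulmxDr linearD /= !(alt_psi _ _ psi_x, alt_psi _ _ psi_z) // opprD.
have pfaff_E := pfaff_psi psi_linear psiM psi1 polar_alt polar_det.
rewrite /inter intrM wedge_pfaff !intrB -!pfaff_intmx !intmxD !intmxM -psi_x -psi_z.
rewrite -mulmxDr -(psiD psi_linear) !pfaff_E // ?(alt_psi _ _ psi_x) ?(alt_psi _ _ psi_z) //.
transitivity ((complex_orientation J)%:~R * pfaff E * rnorm2 yx yz); first by rewrite /rnorm2 /rnorm; ring.
by rewrite polar_orientation mul1r.
Qed.

Lemma NS_gram_polar a b ya yb :
  psi ya = intmx R a -> psi yb = intmx R b ->
  rosati_invariant R E0 a -> rosati_invariant R E0 b ->
  intmx R (NS_gram J (three E0 (E0 *m a) (E0 *m b))) =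
    \matrix_(i < 3, j < 3)
      three (three 2 (rtr ya) (rtr yb) j)
            (three (rtr ya) (2 * rnorm ya) (rnorm2 ya yb) j)
            (three (rtr yb) (rnorm2 ya yb) (2 * rnorm yb) j) i.
Proof.
move=> psi_a psi_b ros_a ros_b; pose ys := three 1%:M ya yb.
have psi_ys i : psi (ys i) = intmx R (three 1%:M a b i).
  by case: i => [[|[|[|//]]] ?]; rewrite /ys /= ?psi1 ?intmx1.
have xs_alt i : (E0 *m three 1%:M a b i)^T = - (E0 *m three 1%:M a b i).
  by case: i => [[|[|[|//]]] ?]; rewrite /= ?mulmx1 ?rosati_invariant_alt.
apply/matrixP => i j; rewrite !mxE !three_polar.
rewrite (inter_polar_psi (psi_ys i) (psi_ys j) (xs_alt i) (xs_alt j)).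
case: i => [[|[|[|//]]] ?]; case: j => [[|[|[|//]]] ?];
  rewrite /ys /= ?rnorm2_11 ?rnorm2_1l ?rnorm2_1r ?rnorm2_diag //; exact: rnorm2C.
Qed.

End Gram.

End Polarization.

Unset Implicit Arguments.

Theorem mainTheorem7 (R : realType) (J : 'M[R]_4) (E0 a b : 'M[int]_4)
  (psi : 'M[R]_2 -> 'M[R]_4) (ya yb : 'M[R]_2) :
  complex_structure J ->
  principal_polarization J E0 ->
  simple_torus J ->
  end_ring_basis J a b ->
  primitive_end J a -> primitive_end J b ->
  rosati_invariant R E0 a -> rosati_invariant R E0 b ->
  real_splitting a b psi ->
  psi ya = intmx R a -> psi yb = intmx R b ->
  let L := three E0 (E0 *m a) (E0 *m b) in
  [/\ NS_lattice_basis J L,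
      intmx R (NS_gram J L) =
        \matrix_(i < 3, j < 3)
          three (three 2 (rtr ya) (rtr yb) j)
                (three (rtr ya) (2 * rnorm ya) (rnorm2 ya yb) j)
                (three (rtr yb) (rnorm2 ya yb) (2 * rnorm yb) j) i
    & (\det (NS_gram J L))%:~R = 1 / 2 * \det (Sdelta ya yb)].
Proof.
move=> JJ [[E0_alt E0J] E0_pos detE0] _ ab_basis _ _ ros_a ros_b psi_split psi_a psi_b L.
have [[psi_lin psiM psi1 _] _] := psi_split.
have gram := NS_gram_polar JJ E0_alt E0J E0_pos detE0 psi_lin psiM psi1 psi_a psi_b ros_a ros_b.
split => //; last by rewrite -det_intmx gram det_NS_gram_Sdelta.
apply: NS_lattice_basis_polar => //.
exact: real_splitting_noncomm psi_split psi_a psi_b.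
Qed.
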